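(* For every infinite word $u\in A^{\mathbb{N}}$, the worm $W(u)$ tiles the integer half-space by translations: $\mathbb{H}=W(u)\oplus\Lambda$, i.e. every $z\in\mathbb{H}$ is written uniquely as $w+t$ with $w\in W(u)$, $t\in\Lambda$.
   Context: $A=\{0,\dots,d\}$, $h(y)=\sum_iy_i$ on $\mathbb{R}^{d+1}$, $\mathbb{H}=\{z\in\mathbb{Z}^{d+1}:h(z)\ge0\}$, $\Lambda=\{z\in\mathbb{Z}^{d+1}:h(z)=0\}$. $W(u)=\{\mathrm{ab}(p):p\text{ finite prefix of }u\}$, where $\mathrm{ab}(p)\in\mathbb{Z}^{d+1}$ counts the occurrences of each letter in $p$. *)

From mathcomp Require Import all_boot all_order all_algebra.
Set Implicit Arguments. Unset Strict Implicit. Unset Printing Implicit Defensive.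
Import Order.TTheory GRing.Theory Num.Theory.
Local Open Scope ring_scope.

(* Alphabet A = {0,...,d} is 'I_d.+1; points of Z^{d+1} are {ffun 'I_d.+1 -> int}. *)
Definition vec (d : nat) := {ffun 'I_d.+1 -> int}.

Definition h (d : nat) (y : vec d) : int := \sum_(i < d.+1) y i.

Definition inH (d : nat) (z : vec d) : Prop := 0 <= h z.
Definition inLambda (d : nat) (z : vec d) : Prop := h z = 0.

Definition ab_prefix (d : nat) (u : nat -> 'I_d.+1) (n : nat) : vec d :=
  [ffun i => (count (fun k => u k == i) (iota 0 n))%:Z].

(* worm W(u) = { ab(p) : p finite prefix of u } (prefixes include the empty one) *)
Definition inWorm (d : nat) (u : nat -> 'I_d.+1) (w : vec d) : Prop :=
  exists n : nat, w = ab_prefix u n.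

(* The height h is additive and the prefix of length n of u has height n, so
   the worm meets every level set {h = n}, n >= 0, in exactly one point.  Any
   set with this property tiles the half-space {h >= 0} by the kernel of h:
   z of height n decomposes only as (the worm point of height n) + (a kernel
   element). *)

From HB Require Import structures.
From mathcomp Require Import all_boot all_order all_algebra.
Import Order.TTheory GRing.Theory Num.Theory.
Set Implicit Arguments. Unset Strict Implicit. Unset Printing Implicit Defensive.
Local Open Scope ring_scope.

Section LevelTransversalTiling.

Variables (V : zmodType) (f : {additive V -> int}) (g : nat -> V).
Hypothesis f_g : forall n : nat, f (g n) = n%:Z.

Lemma level_transversal_tiling (z : V) :
  0 <= f z <->
    (exists wt : V * V,
       [/\ exists n : nat, wt.1 = g n, f wt.2 = 0 & z = wt.1 + wt.2] /\
       forall wt' : V * V,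
         [/\ exists n : nat, wt'.1 = g n, f wt'.2 = 0 & z = wt'.1 + wt'.2] ->
         wt' = wt).
Proof.
have level_g m t : f t = 0 -> f (g m + t) = m%:Z.
  by move=> ft0; rewrite raddfD f_g ft0 addr0.
split=> [fz_ge0 | [[w t] [[[m ->] ft0 ->] _]]]; last by rewrite level_g.
have [n fzn] : exists n : nat, f z = n%:Z by exists `|f z|%N; rewrite gez0_abs.
have ft0 : f (z - g n) = 0 by rewrite raddfB f_g fzn subrr.
exists (g n, z - g n); split; first by split; [exists n | | rewrite addrC subrK].
case=> w t /= [[m ->] ft'0 zE].
have [mn] : n%:Z = m%:Z by rewrite -fzn zE level_g.
by rewrite zE -mn addrC addKr.
Qed.

End LevelTransversalTiling.

Lemma h_is_zmod_morphism (d : nat) : zmod_morphism (@h d).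
Proof. by move=> x y; rewrite /h -sumrB; apply: eq_bigr => i _; rewrite !ffunE. Qed.

HB.instance Definition _ (d : nat) :=
  GRing.isZmodMorphism.Build (vec d) int (@h d) (@h_is_zmod_morphism d).

Lemma sum_count_mem (T : finType) (s : seq T) :
  (\sum_(x : T) count_mem x s)%N = size s.
Proof.
elim: s => [|y s IHs] /=; first by rewrite big1.
rewrite big_split /= IHs (bigD1 y) //= eqxx big1 // => x /negbTE.
by rewrite eq_sym => ->.
Qed.

Lemma h_ab_prefix (d : nat) (u : nat -> 'I_d.+1) (n : nat) :
  h (ab_prefix u n) = n%:Z.
Proof.
rewrite /h; under eq_bigr do rewrite ffunE -(count_map u (pred1 _)).
by rewrite -(big_morph Posz PoszD (erefl 0%:Z)) sum_count_mem size_map size_iota.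
Qed.

Theorem lemma3p14 (d : nat) (u : nat -> 'I_d.+1) :
  forall z : vec d, inH z <->
    (exists wt : vec d * vec d,
       [/\ inWorm u wt.1, inLambda wt.2 & z = wt.1 + wt.2] /\
       forall wt' : vec d * vec d,
         [/\ inWorm u wt'.1, inLambda wt'.2 & z = wt'.1 + wt'.2] -> wt' = wt).
Proof. move=> z; exact: level_transversal_tiling (h_ab_prefix u) z. Qed.
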